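(* For integers $k\ge 1$, $n\ge 0$ and $j\in\{-1,0,1\}$ let $$h_{n,k}(j)=\sum _{i=0}^n (-1)^{i-1+j} \binom{n}{i} F_{i-j} (k+1)^{n-i}.$$ Then for all integers $k,n\ge 1$ and $m\ge 1$ the following identities hold (writing $h_{t}(j)$ for $h_{t,k}(j)$): (1) $h_{n}(1) (h_{m}(1) h_{n}(1) - h_{m+n}(1)) + h_{n}(0)^2 h_{m}(-1)=h_{n}(0) (h_{m+n}(0) - 2 h_{m}(0) h_{n}(1))$; (2) $h_{m+n}(0) (h_{n}(1) + h_{n}(-1))= 2 h_{m}(0) (h_{n}(0)^2 + h_{n}(1) h_{n}(-1)) + h_{n}(0) (2 h_{m}(1) h_{n}(1) - h_{m+n}(1) + 2 h_{m}(-1) h_{n}(-1) - h_{m+n}(-1))$; (3) $h_{n}(0)^2 h_{m}(1) + h_{n}(-1) (h_{m}(-1) h_{n}(-1) - h_{m+n}(-1))= h_{n}(0) (h_{m+n}(0) - 2 h_{m}(0) h_{n}(-1))$; (4) $h_{n+1}(0)^2 + h_{n+1}(1)^2= h_{n}(0)^2 (1+(1+k)^2) + (1+k)^2 h_{n}(1)^2 + h_{n}(-1)^2 + 2(1+k) h_{n}(0)(h_{n}(1) + h_{n}(-1))$; (5) $h_{n}(1)^3 = h_{n}(0) h_{2n}(0) + h_{n}(1) h_{2n}(1) - h_{n}(0)^2 (2 h_{n}(1) + h_{n}(-1))$; (6) $2 h_{n}(0)^3= h_{2n}(0) (h_{n}(1) + h_{n}(-1)) + h_{n}(0) (-2 h_{n}(1)^2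 + h_{2n}(1) - 2 h_{n}(1) h_{n}(-1) - 2 h_{n}(-1)^2 + h_{2n}(-1))$; (7) $h_{n}(1)^2 h_{2n}(1)= h_{n}(0)^4 + h_{n}(1)^4 - h_{n}(0) h_{2n}(0) (h_{n}(1) + h_{n}(-1)) + h_{n}(0)^2 (3 h_{n}(1)^2- h_{2n}(1) + 2 h_{n}(1) h_{n}(-1) + h_{n}(-1)^2)$; (8) $2 h_{n}(0)^2 h_{2n}(0)= 4 h_{n}(0)^3 (h_{n}(1) + h_{n}(-1)) - h_{2n}(0) (h_{n}(1)^2 + h_{n}(-1)^2) + h_{n}(0) (h_{n}(1) + h_{n}(-1)) (2 h_{n}(1)^2 - h_{2n}(1) + 2 h_{n}(-1)^2 - h_{2n}(-1))$; (9) $h_{n}(1)^3 + h_{3n}(1) + h_{n}(0)^2 (2 h_{n}(1) + h_{n}(-1))=2 (h_{n}(0) h_{2n}(0) + h_{n}(1) h_{2n}(1))$; (10) $h_{2n}(0) (h_{n}(1) + h_{n}(-1))= h_{n}(0)^3 + h_{3n}(0) + h_{n}(0) (h_{n}(1)^2 - h_{2n}(1) + h_{n}(1) h_{n}(-1) + h_{n}(-1)^2 - h_{2n}(-1))$; (11) $h_{n}(1) ( 2 h_{n}(1) h_{2n}(1)-h_{n}(1)^3 - h_{3n}(1))= h_{n}(0)^4 + h_{n}(0)\big(h_{3n}(0) - h_{2n}(0) (3 h_{n}(1) + h_{n}(-1))\big) + h_{n}(0)^2 (3 h_{n}(1)^2 - h_{2n}(1) + 2 h_{n}(1) h_{n}(-1)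 + h_{n}(-1)^2 - h_{2n}(-1))$.
   Context: $F_k$ denotes the Fibonacci numbers, $F_0=0$, $F_1=1$, $F_k=F_{k-1}+F_{k-2}$, extended to negative indices by $F_{-k}=(-1)^{k+1}F_k$ (so $F_{-1}=1$, which is needed for the term $i=0$, $j=1$ in the definition of $h_{n,k}$). *)

From mathcomp Require Import all_boot all_order all_algebra.
Set Implicit Arguments. Unset Strict Implicit. Unset Printing Implicit Defensive.
Import Order.TTheory GRing.Theory Num.Theory.
Local Open Scope ring_scope.

Fixpoint fib (n : nat) : int :=
  match n with
  | 0%N => 0
  | 1%N => 1
  | (m.+1 as p).+1 => fib p + fib m
  end.

(* Extension to integer indices: F_{-k} = (-1)^(k+1) F_k.
   Negz m denotes -(m+1), so F_{Negz m} = (-1)^(m+2) F_{m+1}. *)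
Definition fibz (z : int) : int :=
  match z with
  | Posz n => fib n
  | Negz m => (-1) ^+ (m.+2) * fib m.+1
  end.

Definition h (k n : nat) (j : int) : int :=
  \sum_(0 <= i < n.+1)
     (-1) ^ (i%:Z - 1 + j) * ('C(n, i))%:R * fibz (i%:Z - j) * ((k.+1)%:R) ^+ (n - i).

(* With a = k + 1, the coefficients c_j(i) = (-1)^(i-1+j) F_{i-j} satisfy
   c_j(i+1) = c_{j-1}(i) and c_{-1} = c_1 - c_0, so Pascal's rule turns h into
   the recurrence h_{n+1}(0) = a h_n(0) + h_n(-1), h_{n+1}(1) = a h_n(1) + h_n(0),
   with h_n(-1) = h_n(1) - h_n(0).  Hence [[h_n(-1), h_n(0)], [h_n(0), h_n(1)]]
   is M^n for M = [[a - 1, 1], [1, a]], and M^(m+n) = M^m M^n gives addition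
   formulas for h_{m+n}(0) and h_{m+n}(1).  After substituting them, every
   identity is a polynomial identity in h_m(0), h_m(1), h_n(0), h_n(1) and k. *)

From mathcomp Require Import all_boot all_order all_algebra ring zify.
Set Implicit Arguments. Unset Strict Implicit. Unset Printing Implicit Defensive.
Import Order.TTheory GRing.Theory Num.Theory.
Local Open Scope ring_scope.

Section BinomialTransform.

Context {R : comNzRingType} (a : R).

Definition binomial_transform (f : nat -> R) (n : nat) : R :=
  \sum_(i < n.+1) 'C(n, i)%:R * f i * a ^+ (n - i).

Lemma eq_binomial_transform f g :
  f =1 g -> binomial_transform f =1 binomial_transform g.
Proof. by move=> fg n; apply: eq_bigr => i _; rewrite fg. Qed.

Lemma binomial_transform0 f : binomial_transform f 0 = f 0%N.
Proof. by rewrite /binomial_transform big_ord1 bin0 expr0 mul1r mulr1. Qed.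

Lemma binomial_transformS f n :
  binomial_transform f n.+1 =
    a * binomial_transform f n + binomial_transform (fun i => f i.+1) n.
Proof.
rewrite /binomial_transform big_ord_recl /= bin0 subn0.
under eq_bigr => i _ do rewrite /bump /= add1n binS natrD !mulrDl subSS.
rewrite big_split /= addrA; congr (_ + _).
rewrite big_ord_recr /= bin_small // !mul0r addr0.
rewrite mulr_sumr big_ord_recl /= bin0 subn0 exprS mulrCA; congr (_ + _).
apply: eq_bigr => i _; rewrite /bump /= add1n.
have -> : (n - i = (n - i.+1).+1)%N by have := ltn_ord i; lia.
by rewrite exprS; ring.
Qed.

Lemma binomial_transformB f g n :
  binomial_transform (fun i => f i - g i) n =
    binomial_transform f n - binomial_transform g n.
Proof. by rewrite /binomial_transform -sumrB; apply: eq_bigr => i _; ring. Qed.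

End BinomialTransform.

Lemma fibzD1 (z : int) : fibz (z + 1) = fibz z + fibz (z - 1).
Proof.
case: z => [[|n]|[|m]]; [reflexivity| |reflexivity|].
- have -> : n.+1%:Z + 1 = n.+2 by lia.
  by have -> : n.+1%:Z - 1 = n by lia.
- have -> : Negz m.+1 + 1 = Negz m by lia.
  have -> : Negz m.+1 - 1 = Negz m.+2 by lia.
  rewrite /= !exprS; ring.
Qed.

Lemma signzD1 (R : unitRingType) (z : int) : (-1 : R) ^ (z + 1) = - (-1) ^ z.
Proof. by rewrite exprzDr ?unitrN1 // expr1z mulrN1. Qed.

Definition hcoef (j : int) (i : nat) : int := (-1) ^ (i%:Z - 1 + j) * fibz (i%:Z - j).

Lemma hcoefS j i : hcoef j i.+1 = hcoef (j - 1) i.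
Proof.
rewrite /hcoef (_ : i.+1%:Z - 1 + j = i%:Z - 1 + (j - 1) + 1 + 1); last by lia.
by rewrite (_ : i.+1%:Z - j = i%:Z - (j - 1)) ?signzD1 ?opprK //; lia.
Qed.

Lemma hcoefN1 i : hcoef (-1) i = hcoef 1 i - hcoef 0 i.
Proof.
rewrite /hcoef (_ : i%:Z - 1 + 1 = i%:Z - 1 + -1 + 1 + 1); last by lia.
rewrite (_ : i%:Z - 1 + 0 = i%:Z - 1 + -1 + 1); last by lia.
rewrite (_ : i%:Z - -1 = i%:Z + 1); last by lia.
rewrite (_ : i%:Z - 0 = i%:Z); last by lia.
rewrite fibzD1 !signzD1; ring.
Qed.

Section ShiftedFibonacciSums.

Variable k : nat.

Lemma h_binomial_transform n j :
  h k n j = binomial_transform (k.+1)%:R (hcoef j) n.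
Proof.
rewrite /h /binomial_transform big_mkord; apply: eq_bigr => i _.
by rewrite /hcoef; ring.
Qed.

Lemma hS n j : h k n.+1 j = k.+1%:R * h k n j + h k n (j - 1).
Proof.
by rewrite !h_binomial_transform binomial_transformS (eq_binomial_transform _ (hcoefS j)).
Qed.

Lemma hN1 n : h k n (-1) = h k n 1 - h k n 0.
Proof.
by rewrite !h_binomial_transform (eq_binomial_transform _ hcoefN1) binomial_transformB.
Qed.

Lemma h0_0 : h k 0 0 = 0.
Proof. by rewrite h_binomial_transform binomial_transform0 /hcoef mulr0. Qed.

Lemma h0_1 : h k 0 1 = 1.
Proof. by rewrite h_binomial_transform binomial_transform0; reflexivity. Qed.

Lemma hS0 n : h k n.+1 0 = k.+1%:R * h k n 0 + h k n (-1).
Proof. exact: hS. Qed.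

Lemma hS1 n : h k n.+1 1 = k.+1%:R * h k n 1 + h k n 0.
Proof. by rewrite hS subrr. Qed.

Lemma h_addn m n :
  h k (m + n) 0 = h k m (-1) * h k n 0 + h k m 0 * h k n 1 /\
  h k (m + n) 1 = h k m 0 * h k n 0 + h k m 1 * h k n 1.
Proof.
elim: m => [|m [IH0 IH1]]; first by rewrite add0n hN1 h0_0 h0_1; split; ring.
by rewrite addSn !hN1 !hS0 !hS1 !hN1 IH0 IH1 !hN1; split; ring.
Qed.

End ShiftedFibonacciSums.

Theorem proposition7p4 (k n m : nat) :
  (1 <= k)%N -> (1 <= n)%N -> (1 <= m)%N ->
  let H := h k in
  (
   (* (1) *)
   H n 1 * (H m 1 * H n 1 - H (m + n)%N 1) + H n 0 ^+ 2 * H m (-1)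
     = H n 0 * (H (m + n)%N 0 - 2 * H m 0 * H n 1)
   /\ (* (2) *)
   H (m + n)%N 0 * (H n 1 + H n (-1))
     = 2 * H m 0 * (H n 0 ^+ 2 + H n 1 * H n (-1))
       + H n 0 * (2 * H m 1 * H n 1 - H (m + n)%N 1
                  + 2 * H m (-1) * H n (-1) - H (m + n)%N (-1))
   /\ (* (3) *)
   H n 0 ^+ 2 * H m 1 + H n (-1) * (H m (-1) * H n (-1) - H (m + n)%N (-1))
     = H n 0 * (H (m + n)%N 0 - 2 * H m 0 * H n (-1))
   /\ (* (4) *)
   H n.+1 0 ^+ 2 + H n.+1 1 ^+ 2
     = H n 0 ^+ 2 * (1 + (1 + k%:R) ^+ 2) + (1 + k%:R) ^+ 2 * H n 1 ^+ 2
       + H n (-1) ^+ 2 + 2 * (1 + k%:R) * H n 0 * (H n 1 + H n (-1))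
   /\ (* (5) *)
   H n 1 ^+ 3
     = H n 0 * H (2 * n)%N 0 + H n 1 * H (2 * n)%N 1
       - H n 0 ^+ 2 * (2 * H n 1 + H n (-1))
   /\ (* (6) *)
   2 * H n 0 ^+ 3
     = H (2 * n)%N 0 * (H n 1 + H n (-1))
       + H n 0 * (- 2 * H n 1 ^+ 2 + H (2 * n)%N 1 - 2 * H n 1 * H n (-1)
                  - 2 * H n (-1) ^+ 2 + H (2 * n)%N (-1))
   /\ (* (7) *)
   H n 1 ^+ 2 * H (2 * n)%N 1
     = H n 0 ^+ 4 + H n 1 ^+ 4 - H n 0 * H (2 * n)%N 0 * (H n 1 + H n (-1))
       + H n 0 ^+ 2 * (3 * H n 1 ^+ 2 - H (2 * n)%N 1 + 2 * H n 1 * H n (-1)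
                       + H n (-1) ^+ 2)
   /\ (* (8) *)
   2 * H n 0 ^+ 2 * H (2 * n)%N 0
     = 4 * H n 0 ^+ 3 * (H n 1 + H n (-1))
       - H (2 * n)%N 0 * (H n 1 ^+ 2 + H n (-1) ^+ 2)
       + H n 0 * (H n 1 + H n (-1)) * (2 * H n 1 ^+ 2 - H (2 * n)%N 1
                                      + 2 * H n (-1) ^+ 2 - H (2 * n)%N (-1))
   /\ (* (9) *)
   H n 1 ^+ 3 + H (3 * n)%N 1 + H n 0 ^+ 2 * (2 * H n 1 + H n (-1))
     = 2 * (H n 0 * H (2 * n)%N 0 + H n 1 * H (2 * n)%N 1)
   /\ (* (10) *)
   H (2 * n)%N 0 * (H n 1 + H n (-1))
     = H n 0 ^+ 3 + H (3 * n)%N 0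
       + H n 0 * (H n 1 ^+ 2 - H (2 * n)%N 1 + H n 1 * H n (-1)
                  + H n (-1) ^+ 2 - H (2 * n)%N (-1))
   /\ (* (11) *)
   H n 1 * (2 * H n 1 * H (2 * n)%N 1 - H n 1 ^+ 3 - H (3 * n)%N 1)
     = H n 0 ^+ 4
       + H n 0 * (H (3 * n)%N 0 - H (2 * n)%N 0 * (3 * H n 1 + H n (-1)))
       + H n 0 ^+ 2 * (3 * H n 1 ^+ 2 - H (2 * n)%N 1 + 2 * H n 1 * H n (-1)
                       + H n (-1) ^+ 2 - H (2 * n)%N (-1))
  ).
Proof.
move=> _ _ _ H; rewrite {}/H.
have [hmn0 hmn1] := h_addn k m n.
have [h2n0 h2n1] := h_addn k n n.
have [h3n0 h3n1] := h_addn k n (n + n).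
rewrite !mulSn !mul0n !addn0 !hN1 h3n0 h3n1 h2n0 h2n1 hmn0 hmn1 !hS0 !hS1 !hN1.
by repeat split; ring.
Qed.
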